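(* Assume the standing setup below with $0<T_2<T_1<1$ and $\sum_m mQ(m)>0$. Then: (i) for every $q\in[0,1]$ with $\psi(q)\in(0,1)$ (where $\psi<1$), $\psi$ is differentiable at $q$ with $\frac{d\psi}{dq}>0$; and (ii) $\frac{d\tilde\nu}{dq}<0$ for all $q\in[0,1]$. Here $q=\frac{1}{\langle k\rangle}\sum_{k\ge1}k\phi(k)P(k)$ for a training profile $\phi:\{1,2,\dots\}\to[0,1]$, so in particular for fixed $T_2$ the outbreak constraint $1-\psi\le\gamma$ is equivalent to a lower bound on the linear functional $\frac{1}{\langle k\rangle}\sum_k k\phi(k)P(k)$.
   Context: Standing setup. $P$ is a probability distribution on $\{0,1,\dots,k_{\max}\}$ with mean $\langle k\rangle=\sum_k kP(k)>0$; $Q(k)=(k+1)P(k+1)/\langle k\rangle$ for $k\ge0$. Fix $T_1,T_2\in(0,1)$. For $q\in[0,1]$ set $P_q(k_1,k_2)=\binom{k_1+k_2}{k_2}q^{k_2}(1-q)^{k_1}P(k_1+k_2)$ and $Q_q(k_1,k_2)=\binom{k_1+k_2}{k_2}q^{k_2}(1-q)^{k_1}Q(k_1+k_2)$ (with $0^0=1$). Define $\tilde\nu(q)=T_1\sum_{k_1,k_2}k_1Q_q(k_1,k_2)+T_2\sum_{k_1,k_2}k_2Q_q(k_1,k_2)$. For $u\in[0,1]$ let $F_q(u)=\sum_{k_1,k_2}(1+(u-1)T_1)^{k_1}(1+(u-1)T_2)^{k_2}Q_q(k_1,k_2)$ and $G_q(u)=\sum_{k_1,k_2}(1+(u-1)T_1)^{k_1}(1+(u-1)T_2)^{k_2}P_q(k_1,k_2)$.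 Let $u^*(q)$ be the smallest solution in $[0,1]$ of $u=F_q(u)$ and $\psi(q)=G_q(u^*(q))$. *)

From Stdlib Require Import Reals ClassicalEpsilon.
Open Scope R_scope.

Definition is_degree_dist (P : nat -> R) (kmax : nat) : Prop :=
  (forall k, 0 <= P k) /\ (forall k, (kmax < k)%nat -> P k = 0) /\
  sum_f_R0 P kmax = 1.

Definition mean_deg (P : nat -> R) (kmax : nat) : R :=
  sum_f_R0 (fun k => INR k * P k) kmax.

Definition Qex (P : nat -> R) (kmax : nat) (k : nat) : R :=
  INR (k + 1) * P (k + 1)%nat / mean_deg P kmax.

(* double sum over 0 <= k1, k2 <= kmax (all other terms vanish) *)
Definition dsum (kmax : nat) (f : nat -> nat -> R) : R :=
  sum_f_R0 (fun k1 => sum_f_R0 (fun k2 => f k1 k2) kmax) kmax.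

(* P_q(k1,k2) and Q_q(k1,k2); note 0^0 = 1 for Stdlib pow *)
Definition Pq (P : nat -> R) (kmax : nat) (q : R) (k1 k2 : nat) : R :=
  C (k1 + k2) k2 * q ^ k2 * (1 - q) ^ k1 * P (k1 + k2)%nat.

Definition Qq (P : nat -> R) (kmax : nat) (q : R) (k1 k2 : nat) : R :=
  C (k1 + k2) k2 * q ^ k2 * (1 - q) ^ k1 * Qex P kmax (k1 + k2)%nat.

Definition nu_tilde (P : nat -> R) (kmax : nat) (T1 T2 q : R) : R :=
  T1 * dsum kmax (fun k1 k2 => INR k1 * Qq P kmax q k1 k2)
  + T2 * dsum kmax (fun k1 k2 => INR k2 * Qq P kmax q k1 k2).

Definition Fq (P : nat -> R) (kmax : nat) (T1 T2 q u : R) : R :=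
  dsum kmax (fun k1 k2 =>
    (1 + (u - 1) * T1) ^ k1 * (1 + (u - 1) * T2) ^ k2 * Qq P kmax q k1 k2).

Definition Gq (P : nat -> R) (kmax : nat) (T1 T2 q u : R) : R :=
  dsum kmax (fun k1 k2 =>
    (1 + (u - 1) * T1) ^ k1 * (1 + (u - 1) * T2) ^ k2 * Pq P kmax q k1 k2).

Definition is_ustar (P : nat -> R) (kmax : nat) (T1 T2 q u : R) : Prop :=
  0 <= u <= 1 /\ u = Fq P kmax T1 T2 q u /\
  (forall v, 0 <= v <= 1 -> v = Fq P kmax T1 T2 q v -> u <= v).

Definition ustar (P : nat -> R) (kmax : nat) (T1 T2 q : R) : R :=
  epsilon (inhabits 0) (is_ustar P kmax T1 T2 q).

Definition psi (P : nat -> R) (kmax : nat) (T1 T2 q : R) : R :=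
  Gq P kmax T1 T2 q (ustar P kmax T1 T2 q).

(* f : R -> R, considered on the domain [0,1], has derivative l at q
   (one-sided at the endpoints, two-sided in the interior). *)
Definition has_deriv01 (f : R -> R) (q l : R) : Prop :=
  forall eps, 0 < eps -> exists delta, 0 < delta /\
    forall h, h <> 0 -> Rabs h < delta -> 0 <= q + h <= 1 ->
      Rabs ((f (q + h) - f q) / h - l) < eps.

(* Summing the double sums along the antidiagonals [k1 + k2 = m] turns [F_q] and [G_q]
   into the generating functions [g1], [g0] of [Q], [P] evaluated at [1 + (u - 1) T(q)],
   with the effective transmissibility [T(q) = T1 + (T2 - T1) q], and [nu_tilde] into
   [T(q) * sum_m m Q(m)]; this gives (ii) since [T2 < T1].
   For (i), when [psi(q) < 1] the point [x(q) = 1 + (u*(q) - 1) T(q)] lies in [0,1) and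
   solves [K(x) = 1 / T(q)], where [K(x) = (1 - g1(x)) / (1 - x)] is a polynomial that is
   strictly increasing on [0, oo) (some [Q(m)], [m >= 2], is positive).  Implicit
   differentiation gives [x'(q) = (T1 - T2) / (T(q)^2 K'(x)) > 0], and
   [psi = g0 o x] with [g0' > 0] on (0, 1]. *)

From Stdlib Require Import Reals ClassicalEpsilon Lra Lia.
Open Scope R_scope.

Lemma sum_trunc (f : nat -> R) (M N : nat) :
  (M <= N)%nat -> (forall i, (M < i)%nat -> f i = 0) ->
  sum_f_R0 f N = sum_f_R0 f M.
Proof.
  intros HMN Hz. induction N as [|N IH].
  - replace M with 0%nat by lia. reflexivity.
  - destruct (Nat.eq_dec M (S N)) as [->|Hne]; [reflexivity|].
    simpl. rewrite IH, (Hz (S N)) by lia. ring.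
Qed.

Lemma sum_ge_term (f : nat -> R) (N i : nat) :
  (forall n, 0 <= f n) -> (i <= N)%nat -> f i <= sum_f_R0 f N.
Proof.
  intros Hf Hi. induction N as [|N IH].
  - replace i with 0%nat by lia. simpl. lra.
  - simpl. destruct (Nat.eq_dec i (S N)) as [->|Hne].
    + pose proof (cond_pos_sum f N Hf). lra.
    + pose proof (Hf (S N)). assert (f i <= sum_f_R0 f N) by (apply IH; lia). lra.
Qed.

Lemma sum_pos_witness (f : nat -> R) (N : nat) :
  0 < sum_f_R0 f N -> exists n, (n <= N)%nat /\ 0 < f n.
Proof.
  induction N as [|N IH]; simpl; intros Hpos.
  - exists 0%nat. split; [lia | exact Hpos].
  - destruct (Rlt_le_dec 0 (f (S N))) as [Hf|Hf].
    + exists (S N). split; [lia | exact Hf].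
    + destruct IH as [n [Hn Hfn]]; [lra|]. exists n. split; [lia | exact Hfn].
Qed.

Lemma sum_antidiag (g : nat -> nat -> R) (N : nat) :
  sum_f_R0 (fun k1 => sum_f_R0 (fun k2 => g k1 k2) (N - k1)) N =
  sum_f_R0 (fun m => sum_f_R0 (fun i => g i (m - i)%nat) m) N.
Proof.
  induction N as [|N IH]; [reflexivity|].
  rewrite !tech5, <- IH. replace (S N - S N)%nat with 0%nat by lia.
  rewrite (sum_eq (fun k1 => sum_f_R0 (fun k2 => g k1 k2) (S N - k1))
    (fun k1 => sum_f_R0 (fun k2 => g k1 k2) (N - k1) + g k1 (S N - k1)%nat)).
  - rewrite sum_plus. simpl. ring.
  - intros i Hi. replace (S N - i)%nat with (S (N - i)) by lia. reflexivity.
Qed.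

Lemma dsum_antidiag (g : nat -> nat -> R) (N : nat) :
  (forall k1 k2, (N < k1 + k2)%nat -> g k1 k2 = 0) ->
  dsum N g = sum_f_R0 (fun m => sum_f_R0 (fun i => g i (m - i)%nat) m) N.
Proof.
  intros Hz. unfold dsum. rewrite <- sum_antidiag. apply sum_eq. intros k1 Hk1.
  apply sum_trunc; [lia|]. intros i Hi. apply Hz. lia.
Qed.

Lemma C_succ (n i : nat) : (i <= n)%nat -> INR (S i) * C (S n) (S i) = INR (S n) * C n i.
Proof.
  intros H. unfold C. replace (S n - S i)%nat with (n - i)%nat by lia.
  rewrite !fact_simpl, !mult_INR.
  pose proof (INR_fact_neq_0 n). pose proof (INR_fact_neq_0 i).
  pose proof (INR_fact_neq_0 (n - i)).
  assert (INR (S i) <> 0) by (apply not_0_INR; lia).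
  field. repeat split; auto.
Qed.

Lemma binomial_weighted (x y : R) (m : nat) :
  sum_f_R0 (fun i => INR i * C m i * x ^ i * y ^ (m - i)) m = INR m * x * (x + y) ^ pred m.
Proof.
  destruct m as [|n]; [simpl; ring|].
  rewrite decomp_sum by lia. simpl pred. rewrite binomial, scal_sum.
  simpl INR at 1. rewrite !Rmult_0_l, Rplus_0_l.
  apply sum_eq. intros i Hi.
  replace (S n - S i)%nat with (n - i)%nat by lia.
  simpl pow. rewrite (C_succ n i Hi). ring.
Qed.

Lemma dsum_binomial (c : nat -> R) (w : nat -> nat -> R) (q : R) (N : nat) :
  (forall m, (N < m)%nat -> c m = 0) ->
  dsum N (fun k1 k2 =>
    w k1 k2 * (C (k1 + k2) k2 * q ^ k2 * (1 - q) ^ k1 * c (k1 + k2)%nat))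
  = sum_f_R0 (fun m =>
      c m * sum_f_R0 (fun i => w i (m - i)%nat * (C m i * (1 - q) ^ i * q ^ (m - i))) m) N.
Proof.
  intros Hc. rewrite dsum_antidiag.
  - apply sum_eq. intros m _. rewrite scal_sum. apply sum_eq. intros i Hi.
    replace (i + (m - i))%nat with m by lia. rewrite <- pascal_step1 by lia. ring.
  - intros k1 k2 H. rewrite Hc by lia. ring.
Qed.

Lemma dsum_binomial_pow (c : nat -> R) (a b q : R) (N : nat) :
  (forall m, (N < m)%nat -> c m = 0) ->
  dsum N (fun k1 k2 =>
    a ^ k1 * b ^ k2 * (C (k1 + k2) k2 * q ^ k2 * (1 - q) ^ k1 * c (k1 + k2)%nat))
  = sum_f_R0 (fun m => c m * ((1 - q) * a + q * b) ^ m) N.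
Proof.
  intros Hc. rewrite (dsum_binomial c (fun k1 k2 => a ^ k1 * b ^ k2)) by exact Hc.
  apply sum_eq. intros m _. rewrite binomial. f_equal. apply sum_eq. intros i _.
  rewrite !Rpow_mult_distr. ring.
Qed.

Lemma dsum_binomial_fst (c : nat -> R) (q : R) (N : nat) :
  (forall m, (N < m)%nat -> c m = 0) ->
  dsum N (fun k1 k2 => INR k1 * (C (k1 + k2) k2 * q ^ k2 * (1 - q) ^ k1 * c (k1 + k2)%nat))
  = (1 - q) * sum_f_R0 (fun m => INR m * c m) N.
Proof.
  intros Hc. rewrite (dsum_binomial c (fun k1 _ => INR k1)) by exact Hc.
  rewrite scal_sum. apply sum_eq. intros m _.
  rewrite (sum_eq _ (fun i => INR i * C m i * (1 - q) ^ i * q ^ (m - i)))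
    by (intros; ring).
  rewrite binomial_weighted. replace (1 - q + q) with 1 by ring. rewrite pow1. ring.
Qed.

Lemma dsum_binomial_snd (c : nat -> R) (q : R) (N : nat) :
  (forall m, (N < m)%nat -> c m = 0) ->
  dsum N (fun k1 k2 => INR k2 * (C (k1 + k2) k2 * q ^ k2 * (1 - q) ^ k1 * c (k1 + k2)%nat))
  = q * sum_f_R0 (fun m => INR m * c m) N.
Proof.
  intros Hc. rewrite (dsum_binomial c (fun _ k2 => INR k2)) by exact Hc.
  rewrite scal_sum. apply sum_eq. intros m _.
  rewrite (sum_eq _ (fun i => C m i * (1 - q) ^ i * q ^ (m - i) * INR m
                             - INR i * C m i * (1 - q) ^ i * q ^ (m - i)))
    by (intros i Hi; rewrite minus_INR by lia; ring).
  rewrite minus_sum, <- scal_sum, binomial_weighted, <- binomial.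
  replace (1 - q + q) with 1 by ring. rewrite !pow1. ring.
Qed.

Fixpoint geom_sum (m : nat) (x : R) : R :=
  match m with O => 0 | S m' => geom_sum m' x + x ^ m' end.

Fixpoint geom_sum_deriv (m : nat) (x : R) : R :=
  match m with O => 0 | S m' => geom_sum_deriv m' x + INR m' * x ^ pred m' end.

Lemma one_sub_pow (m : nat) (x : R) : 1 - x ^ m = (1 - x) * geom_sum m x.
Proof. induction m as [|m IH]; simpl; [ring|]. simpl in IH. nra. Qed.

Lemma geom_sum_le1 (m : nat) (x : R) : (m <= 1)%nat -> geom_sum m x <= 1.
Proof. intros Hm. destruct m as [|[|m]]; simpl; lra || lia. Qed.

Lemma geom_sum_0_le1 (m : nat) : geom_sum m 0 <= 1.
Proof.
  destruct m as [|m]; simpl; [lra|].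
  induction m as [|m IH]; simpl in *; [lra|]. rewrite Rmult_0_l. lra.
Qed.

Lemma geom_sum_deriv_nonneg (m : nat) (x : R) : 0 <= x -> 0 <= geom_sum_deriv m x.
Proof.
  intros Hx. induction m as [|m IH]; simpl; [lra|].
  pose proof (pow_le x (pred m) Hx). pose proof (pos_INR m). nra.
Qed.

Lemma geom_sum_deriv_ge1 (m : nat) (x : R) : 0 <= x -> (2 <= m)%nat -> 1 <= geom_sum_deriv m x.
Proof.
  intros Hx Hm. induction Hm as [|m Hm IH]; simpl; [lra|].
  pose proof (pow_le x (pred m) Hx). pose proof (pos_INR m). nra.
Qed.

Lemma derivable_pt_lim_geom_sum (m : nat) (x : R) :
  derivable_pt_lim (geom_sum m) x (geom_sum_deriv m x).
Proof.
  induction m as [|m IH]; simpl.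
  - apply (derivable_pt_lim_const 0 x).
  - apply (derivable_pt_lim_plus (geom_sum m) (fun y => y ^ m)); auto.
    apply derivable_pt_lim_pow.
Qed.

Lemma derivable_pt_lim_sum (f f' : nat -> R -> R) (N : nat) (x : R) :
  (forall m, derivable_pt_lim (f m) x (f' m x)) ->
  derivable_pt_lim (fun y => sum_f_R0 (fun m => f m y) N) x (sum_f_R0 (fun m => f' m x) N).
Proof.
  intros H. induction N as [|N IH]; simpl; [apply H|].
  apply (derivable_pt_lim_plus (fun y => sum_f_R0 (fun m => f m y) N) (f (S N))); auto.
Qed.

Section GeneratingFunction.

Variables (c : nat -> R) (N : nat).
Hypothesis c_nonneg : forall m, 0 <= c m.

Definition pgf (x : R) : R := sum_f_R0 (fun m => c m * x ^ m) N.
Definition pgf_deriv (x : R) : R := sum_f_R0 (fun m => c m * (INR m * x ^ pred m)) N.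

(* The polynomial [(pgf 1 - pgf x) / (1 - x)] and its derivative. *)
Definition pgf_quot (x : R) : R := sum_f_R0 (fun m => c m * geom_sum m x) N.
Definition pgf_quot_deriv (x : R) : R := sum_f_R0 (fun m => c m * geom_sum_deriv m x) N.

Lemma pgf1 : pgf 1 = sum_f_R0 c N.
Proof. apply sum_eq. intros m _. rewrite pow1. ring. Qed.

Lemma pgf_sub_quot (x : R) : pgf 1 - pgf x = (1 - x) * pgf_quot x.
Proof.
  unfold pgf, pgf_quot. rewrite <- minus_sum, scal_sum. apply sum_eq. intros m _.
  rewrite pow1. transitivity (c m * (1 - x ^ m)); [ring|]. rewrite one_sub_pow. ring.
Qed.

Lemma derivable_pt_lim_pgf (x : R) : derivable_pt_lim pgf x (pgf_deriv x).
Proof.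
  apply (derivable_pt_lim_sum (fun m y => c m * y ^ m) (fun m y => c m * (INR m * y ^ pred m))).
  intros m. apply (derivable_pt_lim_scal (fun y => y ^ m)). apply derivable_pt_lim_pow.
Qed.

Lemma derivable_pt_lim_pgf_quot (x : R) : derivable_pt_lim pgf_quot x (pgf_quot_deriv x).
Proof.
  apply (derivable_pt_lim_sum (fun m y => c m * geom_sum m y)
                              (fun m y => c m * geom_sum_deriv m y)).
  intros m. apply (derivable_pt_lim_scal (geom_sum m)). apply derivable_pt_lim_geom_sum.
Qed.

Lemma continuity_pgf_quot : continuity pgf_quot.
Proof.
  intros x. apply derivable_continuous_pt. exists (pgf_quot_deriv x).
  apply derivable_pt_lim_pgf_quot.
Qed.

Lemma pgf_nonneg (x : R) : 0 <= x -> 0 <= pgf x.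
Proof.
  intros Hx. apply cond_pos_sum. intros m. apply Rmult_le_pos; [apply c_nonneg | apply pow_le, Hx].
Qed.

Lemma pgf_deriv_pos (x : R) :
  0 < sum_f_R0 (fun m => INR m * c m) N -> 0 < x -> 0 < pgf_deriv x.
Proof.
  intros Hmean Hx. destruct (sum_pos_witness _ _ Hmean) as [m [Hm Hcm]].
  assert (Hm0 : (0 < m)%nat) by (destruct m; [simpl in Hcm; lra | lia]).
  pose proof (pos_INR m). pose proof (pow_lt x (pred m) Hx).
  apply Rlt_le_trans with (c m * (INR m * x ^ pred m)).
  - assert (0 < c m) by nra. apply Rmult_lt_0_compat, Rmult_lt_0_compat; auto.
    apply lt_0_INR. exact Hm0.
  - apply (sum_ge_term (fun m => c m * (INR m * x ^ pred m))); [|exact Hm].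
    intros n. pose proof (pos_INR n). pose proof (pow_le x (pred n) (Rlt_le _ _ Hx)).
    pose proof (c_nonneg n). apply Rmult_le_pos; [|apply Rmult_le_pos]; assumption.
Qed.

Lemma pgf_quot0_le : pgf_quot 0 <= sum_f_R0 c N.
Proof.
  apply sum_Rle. intros m _. pose proof (c_nonneg m). pose proof (geom_sum_0_le1 m). nra.
Qed.

(* A coefficient of index at least 2 is what makes [pgf_quot] strictly increasing. *)
Lemma pgf_quot_witness (x : R) :
  sum_f_R0 c N < pgf_quot x -> exists m0, (2 <= m0 <= N)%nat /\ 0 < c m0.
Proof.
  intros Hlt.
  assert (Hpos : 0 < sum_f_R0 (fun m => c m * (geom_sum m x - 1)) N).
  { rewrite (sum_eq _ (fun m => c m * geom_sum m x - c m)) by (intros; ring).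
    unfold pgf_quot in Hlt. rewrite minus_sum. lra. }
  destruct (sum_pos_witness _ _ Hpos) as [m [Hm Hterm]].
  exists m. pose proof (c_nonneg m). destruct (Nat.le_gt_cases m 1) as [Hm1|Hm1].
  - exfalso. pose proof (geom_sum_le1 m x Hm1). nra.
  - split; [lia|]. destruct (Req_dec (c m) 0) as [Hz|Hz]; [|lra].
    rewrite Hz in Hterm. lra.
Qed.

Section StrictlyIncreasing.

Variable m0 : nat.
Hypotheses (m0_ge2 : (2 <= m0)%nat) (m0_le : (m0 <= N)%nat) (c_m0_pos : 0 < c m0).

Lemma pgf_quot_deriv_ge (x : R) : 0 <= x -> c m0 <= pgf_quot_deriv x.
Proof.
  intros Hx. apply Rle_trans with (c m0 * geom_sum_deriv m0 x).
  - pose proof (geom_sum_deriv_ge1 m0 x Hx m0_ge2). nra.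
  - apply (sum_ge_term (fun m => c m * geom_sum_deriv m x)); [|exact m0_le].
    intros n. apply Rmult_le_pos; [apply c_nonneg | apply geom_sum_deriv_nonneg, Hx].
Qed.

Lemma pgf_quot_rate (a b : R) : 0 <= a <= b -> c m0 * (b - a) <= pgf_quot b - pgf_quot a.
Proof.
  intros Hab. destruct (Req_dec a b) as [<-|Hne]; [lra|].
  destruct (MVT_cor2 pgf_quot pgf_quot_deriv a b ltac:(lra)
              (fun x _ => derivable_pt_lim_pgf_quot x)) as [x [Hmvt Hx]].
  rewrite Hmvt. apply Rmult_le_compat_r; [lra|]. apply pgf_quot_deriv_ge. lra.
Qed.

End StrictlyIncreasing.

End GeneratingFunction.

Lemma limit1_in_weaken (f : R -> R) (D D' : R -> Prop) (l x0 : R) :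
  (forall x, D x -> D' x) -> limit1_in f D' l x0 -> limit1_in f D l x0.
Proof.
  intros HD H eps Heps. destruct (H eps Heps) as [d [Hd Hf]].
  exists d. split; [exact Hd|]. intros x [Hx Hdx]. apply Hf. auto.
Qed.

Lemma limit1_in_restrict (f : R -> R) (D : R -> Prop) (l x0 d : R) :
  0 < d -> limit1_in f (fun x => D x /\ Rabs (x - x0) < d) l x0 -> limit1_in f D l x0.
Proof.
  intros Hd H eps Heps. destruct (H eps Heps) as [e [He Hf]].
  exists (Rmin e d). split; [apply Rmin_pos; lra|]. intros x [Hx Hdx].
  simpl in Hdx. unfold Rdist in Hdx.
  apply Hf. simpl. unfold Rdist.
  pose proof (Rmin_l e d). pose proof (Rmin_r e d). repeat split; auto; lra.
Qed.

Lemma limit1_in_ext (f g : R -> R) (D : R -> Prop) (l x0 : R) :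
  (forall x, D x -> f x = g x) -> limit1_in g D l x0 -> limit1_in f D l x0.
Proof.
  intros Hfg H eps Heps. destruct (H eps Heps) as [d [Hd Hg]].
  exists d. split; [exact Hd|]. intros x [Hx Hdx]. rewrite Hfg by exact Hx. apply Hg. auto.
Qed.

Lemma limit1_in_squeeze (f g : R -> R) (D : R -> Prop) (k l l' x0 : R) :
  0 < k -> (forall x, D x -> Rabs (f x - l) <= k * Rabs (g x - l')) ->
  limit1_in g D l' x0 -> limit1_in f D l x0.
Proof.
  intros Hk Hfg H eps Heps. destruct (H (eps / k)) as [d [Hd Hg]].
  { apply Rdiv_lt_0_compat; lra. }
  exists d. split; [exact Hd|]. intros x [Hx Hdx].
  specialize (Hg x (conj Hx Hdx)). simpl in Hg |- *. unfold Rdist in Hg |- *.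
  apply Rle_lt_trans with (k * Rabs (g x - l')); [auto|].
  replace eps with (k * (eps / k)) by (field; lra). apply Rmult_lt_compat_l; lra.
Qed.

(* Carathéodory's form of the derivative. *)
Definition slope (f : R -> R) (x0 d y : R) : R :=
  if Req_EM_T y x0 then d else (f y - f x0) / (y - x0).

Lemma slope_eq (f : R -> R) (x0 d y : R) : f y - f x0 = slope f x0 d y * (y - x0).
Proof.
  unfold slope. destruct (Req_EM_T y x0) as [->|Hne]; [ring|]. field. lra.
Qed.

Lemma limit_slope (f : R -> R) (x0 d : R) :
  derivable_pt_lim f x0 d -> limit1_in (slope f x0 d) (fun _ => True) d x0.
Proof.
  unfold limit1_in, limit_in. simpl. unfold Rdist. intros Hd eps Heps.
  destruct (Hd eps Heps) as [delta Hdelta].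
  exists delta. split; [apply cond_pos|]. intros y [_ Hy].
  unfold slope. destruct (Req_EM_T y x0) as [->|Hne]; [rewrite Rminus_diag, Rabs_R0; exact Heps|].
  specialize (Hdelta (y - x0) ltac:(lra) Hy). replace (x0 + (y - x0)) with y in Hdelta by ring.
  exact Hdelta.
Qed.

Definition diff_quot (f : R -> R) (q h : R) : R := (f (q + h) - f q) / h.

Definition incr01 (q h : R) : Prop := h <> 0 /\ 0 <= q + h <= 1.

Lemma has_deriv01_limit (f : R -> R) (q l : R) :
  has_deriv01 f q l <-> limit1_in (diff_quot f q) (incr01 q) l 0.
Proof.
  unfold has_deriv01, limit1_in, limit_in, diff_quot, incr01. simpl. unfold Rdist.
  split; intros H eps Heps; destruct (H eps Heps) as [d [Hd Hf]]; exists d; split; auto.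
  - intros h [[Hh Hqh] Hdh]. rewrite Rminus_0_r in Hdh. auto.
  - intros h Hh Hdh Hqh. apply Hf. rewrite Rminus_0_r. auto.
Qed.

Lemma has_deriv01_ext (f g : R -> R) (q l : R) :
  (forall t, f t = g t) -> has_deriv01 g q l -> has_deriv01 f q l.
Proof.
  intros Hfg H eps Heps. destruct (H eps Heps) as [d [Hd Hg]].
  exists d. split; [exact Hd|]. intros h Hh Hdh Hqh. rewrite !Hfg. auto.
Qed.

Lemma has_deriv01_of_derivable (f : R -> R) (q l : R) :
  derivable_pt_lim f q l -> has_deriv01 f q l.
Proof.
  intros H eps Heps. destruct (H eps Heps) as [d Hd].
  exists d. split; [apply cond_pos|]. intros h Hh Hdh _. auto.
Qed.

Lemma has_deriv01_continuous (f : R -> R) (q l : R) :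
  has_deriv01 f q l -> limit1_in (fun h => f (q + h)) (incr01 q) (f q) 0.
Proof.
  rewrite has_deriv01_limit. intros H.
  apply (limit1_in_squeeze _ (fun h => h * diff_quot f q h) _ 1 _ 0); [lra| |].
  - intros h [Hh _]. unfold diff_quot. right.
    replace (h * ((f (q + h) - f q) / h) - 0) with (f (q + h) - f q) by (field; exact Hh).
    ring.
  - pose proof (limit_mul _ _ _ _ _ _ (lim_x (incr01 q) 0) H) as Hlim.
    rewrite Rmult_0_l in Hlim. exact Hlim.
Qed.

Lemma has_deriv01_comp (g x : R -> R) (q dg dx : R) :
  derivable_pt_lim g (x q) dg -> has_deriv01 x q dx ->
  has_deriv01 (fun t => g (x t)) q (dg * dx).
Proof.
  intros Hg Hx. pose proof (has_deriv01_continuous _ _ _ Hx) as Hcont.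
  rewrite has_deriv01_limit in *.
  apply (limit1_in_ext _ (fun h => slope g (x q) dg (x (q + h)) * diff_quot x q h)).
  { intros h [Hh _]. unfold diff_quot. rewrite (slope_eq g (x q) dg). field. exact Hh. }
  apply limit_mul; [|exact Hx].
  apply (limit1_in_weaken _ _ (Dgf (incr01 q) (fun _ => True) (fun h => x (q + h)))).
  - intros h Hh. split; [exact Hh | exact I].
  - exact (limit_comp _ _ _ _ _ _ _ Hcont (limit_slope _ _ _ Hg)).
Qed.

Lemma rate_abs (K : R -> R) (k lo a b : R) :
  (forall a b, lo <= a <= b -> k * (b - a) <= K b - K a) -> 0 < k -> lo <= a -> lo <= b ->
  k * Rabs (b - a) <= Rabs (K b - K a).
Proof.
  intros Hrate Hk Ha Hb. destruct (Rle_dec a b) as [Hab|Hab].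
  - pose proof (Hrate a b ltac:(lra)).
    assert (0 <= k * (b - a)) by (apply Rmult_le_pos; lra).
    rewrite !Rabs_right by lra. lra.
  - pose proof (Hrate b a ltac:(lra)).
    assert (0 <= k * (a - b)) by (apply Rmult_le_pos; lra).
    rewrite !Rabs_left1 by lra. lra.
Qed.

Lemma diff_ratio_slope (K : R -> R) (x0 dK y h : R) :
  h <> 0 -> (K y = K x0 -> y = x0) ->
  (y - x0) / h = (K y - K x0) / h * / slope K x0 dK y.
Proof.
  intros Hh Hinj. pose proof (slope_eq K x0 dK y) as Hsl.
  destruct (Req_dec y x0) as [->|Hne].
  - rewrite !Rminus_diag. unfold Rdiv. ring.
  - assert (HKne : K y - K x0 <> 0) by (intros HK; apply Hne, Hinj; lra).
    assert (Hslne : slope K x0 dK y <> 0) by (intros Hz; rewrite Hz, Rmult_0_l in Hsl; auto).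
    rewrite Hsl. field. auto.
Qed.

Lemma has_deriv01_implicit (K s x : R -> R) (q dK ds k lo : R) :
  0 <= q <= 1 -> 0 < k ->
  (forall a b, lo <= a <= b -> k * (b - a) <= K b - K a) ->
  (exists d, 0 < d /\ forall h, Rabs h < d -> 0 <= q + h <= 1 ->
     lo <= x (q + h) /\ K (x (q + h)) = s (q + h)) ->
  derivable_pt_lim K (x q) dK -> dK <> 0 -> has_deriv01 s q ds ->
  has_deriv01 x q (ds / dK).
Proof.
  intros Hq Hk Hrate [d [Hd Hroot]] HK HdK Hs.
  pose proof (has_deriv01_continuous _ _ _ Hs) as Hscont.
  rewrite has_deriv01_limit in *. apply (limit1_in_restrict _ _ _ _ d Hd).
  set (D := fun h => incr01 q h /\ Rabs (h - 0) < d).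
  assert (Hroot0 : lo <= x q /\ K (x q) = s q).
  { specialize (Hroot 0 ltac:(rewrite Rabs_R0; lra) ltac:(lra)).
    rewrite Rplus_0_r in Hroot. exact Hroot. }
  assert (Hsep : forall h, D h -> k * Rabs (x (q + h) - x q) <= Rabs (s (q + h) - s q)).
  { intros h [[_ Hqh] Hdh]. rewrite Rminus_0_r in Hdh.
    destruct (Hroot h Hdh Hqh) as [Hlo HKh]. destruct Hroot0 as [Hlo0 HK0].
    rewrite <- HKh, <- HK0. apply (rate_abs K k lo); assumption. }
  assert (Hxcont : limit1_in (fun h => x (q + h)) D (x q) 0).
  { apply (limit1_in_squeeze _ (fun h => s (q + h)) _ (/ k) _ (s q)).
    - apply Rinv_0_lt_compat, Hk.
    - intros h Hh. specialize (Hsep h Hh).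
      apply (Rmult_le_reg_l k); [exact Hk|]. rewrite <- Rmult_assoc, Rinv_r, Rmult_1_l; lra.
    - apply (limit1_in_weaken _ _ _ _ _ (fun h Hh => proj1 Hh) Hscont). }
  apply (limit1_in_ext _ (fun h => diff_quot s q h * / slope K (x q) dK (x (q + h)))).
  - intros h Hh. specialize (Hsep h Hh). destruct Hh as [[Hh0 Hqh] Hdh].
    rewrite Rminus_0_r in Hdh. destruct (Hroot h Hdh Hqh) as [_ HKh].
    unfold diff_quot. rewrite <- HKh, <- (proj2 Hroot0).
    apply diff_ratio_slope; [exact Hh0|]. intros HKeq.
    rewrite <- HKh, <- (proj2 Hroot0), HKeq, Rminus_diag, Rabs_R0 in Hsep.
    destruct (Req_dec (x (q + h)) (x q)) as [Heq|Hne]; [exact Heq|].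
    assert (0 < Rabs (x (q + h) - x q)) by (apply Rabs_pos_lt; lra). nra.
  - apply limit_mul.
    + exact (limit1_in_weaken _ _ _ _ _ (fun h Hh => proj1 Hh) Hs).
    + apply limit_inv; [|exact HdK].
      apply (limit1_in_weaken _ _ (Dgf D (fun _ => True) (fun h => x (q + h)))).
      * intros h Hh. split; [exact Hh | exact I].
      * exact (limit_comp _ _ _ _ _ _ _ Hxcont (limit_slope _ _ _ HK)).
Qed.

Definition Teff (T1 T2 q : R) : R := T1 + (T2 - T1) * q.

Lemma derivable_pt_lim_Teff (T1 T2 q : R) : derivable_pt_lim (Teff T1 T2) q (T2 - T1).
Proof.
  replace (T2 - T1) with (0 + (T2 - T1) * 1) by ring.
  apply (derivable_pt_lim_plus (fct_cte T1) (fun q => (T2 - T1) * q)).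
  - apply derivable_pt_lim_const.
  - apply (derivable_pt_lim_scal id). apply derivable_pt_lim_id.
Qed.

Lemma Teff_bounds (T1 T2 q : R) : T2 < T1 -> 0 <= q <= 1 -> T2 <= Teff T1 T2 q <= T1.
Proof. intros. unfold Teff. nra. Qed.

Lemma derivable_pt_lim_inv_Teff (T1 T2 q : R) : Teff T1 T2 q <> 0 ->
  derivable_pt_lim (fun t => 1 / Teff T1 T2 t) q ((T1 - T2) / Teff T1 T2 q ^ 2).
Proof.
  intros HT. replace ((T1 - T2) / Teff T1 T2 q ^ 2)
    with ((0 * Teff T1 T2 q - (T2 - T1) * fct_cte 1 q) / Rsqr (Teff T1 T2 q))
    by (unfold fct_cte, Rsqr; field; exact HT).
  apply (derivable_pt_lim_div (fct_cte 1) (Teff T1 T2)); [|apply derivable_pt_lim_Teff|exact HT].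
  apply derivable_pt_lim_const.
Qed.

Section Model.

Variables (P : nat -> R) (kmax : nat).
Hypotheses (HP : is_degree_dist P kmax) (Hmean : 0 < mean_deg P kmax).

Local Notation Q := (Qex P kmax).

Lemma P_nonneg (k : nat) : 0 <= P k.
Proof. apply HP. Qed.

Lemma P_vanish (k : nat) : (kmax < k)%nat -> P k = 0.
Proof. apply HP. Qed.

Lemma Qex_nonneg (k : nat) : 0 <= Q k.
Proof.
  unfold Qex. apply Rmult_le_pos; [apply Rmult_le_pos; [apply pos_INR | apply P_nonneg]|].
  left. apply Rinv_0_lt_compat, Hmean.
Qed.

Lemma Qex_vanish (k : nat) : (kmax < k)%nat -> Q k = 0.
Proof. intros Hk. unfold Qex. rewrite P_vanish by lia. unfold Rdiv. ring. Qed.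

Lemma sum_Qex : sum_f_R0 Q kmax = 1.
Proof.
  assert (Hshift : sum_f_R0 (fun k => INR (k + 1) * P (k + 1)%nat) kmax = mean_deg P kmax).
  { rewrite (sum_eq _ (fun k => INR (S k) * P (S k)))
      by (intros; rewrite Nat.add_1_r; reflexivity).
    transitivity (sum_f_R0 (fun k => INR k * P k) (S kmax)).
    - rewrite (decomp_sum _ (S kmax)) by lia. simpl pred. rewrite Rmult_0_l, Rplus_0_l. reflexivity.
    - unfold mean_deg. rewrite tech5, (P_vanish (S kmax)) by lia. ring. }
  unfold Qex, Rdiv. rewrite <- scal_sum, Hshift. field. lra.
Qed.

Lemma Fq_pgf (T1 T2 q u : R) :
  Fq P kmax T1 T2 q u = pgf Q kmax (1 + (u - 1) * Teff T1 T2 q).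
Proof.
  unfold Fq, Qq, pgf. rewrite dsum_binomial_pow by exact Qex_vanish.
  apply sum_eq. intros m _. unfold Teff. f_equal. f_equal. ring.
Qed.

Lemma Gq_pgf (T1 T2 q u : R) :
  Gq P kmax T1 T2 q u = pgf P kmax (1 + (u - 1) * Teff T1 T2 q).
Proof.
  unfold Gq, Pq, pgf. rewrite dsum_binomial_pow by exact P_vanish.
  apply sum_eq. intros m _. unfold Teff. f_equal. f_equal. ring.
Qed.

Lemma nu_tilde_Teff (T1 T2 q : R) :
  nu_tilde P kmax T1 T2 q = Teff T1 T2 q * sum_f_R0 (fun m => INR m * Q m) kmax.
Proof.
  unfold nu_tilde, Qq.
  rewrite dsum_binomial_fst, dsum_binomial_snd by exact Qex_vanish. unfold Teff. ring.
Qed.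

Lemma pgf_Q1 : pgf Q kmax 1 = 1.
Proof. rewrite pgf1. exact sum_Qex. Qed.

Lemma pgf_P1 : pgf P kmax 1 = 1.
Proof. rewrite pgf1. apply HP. Qed.

Lemma one_sub_pgf_Q (x : R) : 1 - pgf Q kmax x = (1 - x) * pgf_quot Q kmax x.
Proof. rewrite <- pgf_Q1 at 1. apply pgf_sub_quot. Qed.

End Model.

Section FixedPoint.

Variables (P : nat -> R) (kmax : nat).
Hypotheses (HP : is_degree_dist P kmax) (Hmean : 0 < mean_deg P kmax).

Local Notation Q := (Qex P kmax).
Local Notation K := (pgf_quot (Qex P kmax) kmax).

(* The common argument of [F_q] and [G_q] at [u = u*(q)]. *)
Definition xstar (T1 T2 q : R) : R := 1 + (ustar P kmax T1 T2 q - 1) * Teff T1 T2 q.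

Lemma ustar_eq (T1 T2 q u : R) : is_ustar P kmax T1 T2 q u -> ustar P kmax T1 T2 q = u.
Proof.
  intros Hu. assert (Hspec : is_ustar P kmax T1 T2 q (ustar P kmax T1 T2 q))
    by (unfold ustar; apply epsilon_spec; exists u; exact Hu).
  destruct Hu as [Hu [Hufix Humin]], Hspec as [Hs [Hsfix Hsmin]].
  apply Rle_antisym; [apply Hsmin | apply Humin]; auto.
Qed.

Lemma psi_xstar (T1 T2 q : R) : psi P kmax T1 T2 q = pgf P kmax (xstar T1 T2 q).
Proof. unfold psi, xstar. apply Gq_pgf. exact HP. Qed.

Section FixedT.

Variables (T1 T2 q : R).
Hypothesis HT : 0 < Teff T1 T2 q < 1.

Local Notation T := (Teff T1 T2 q).

(* With [x = 1 + (u - 1) T], the fixed-point equation [u = g1(x)] reads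
   [(1 - u) (1 - T K(x)) = 0]. *)
Lemma one_lt_invT : 1 < 1 / T.
Proof. apply Rmult_lt_reg_r with T; [lra|]. field_simplify; lra. Qed.

Lemma fixed_point_root (v : R) : 0 <= v < 1 -> v = Fq P kmax T1 T2 q v ->
  0 <= 1 + (v - 1) * T < 1 /\ K (1 + (v - 1) * T) = 1 / T.
Proof.
  intros Hv Hfix. split; [nra|].
  rewrite Fq_pgf in Hfix by exact HP.
  pose proof (one_sub_pgf_Q P kmax HP Hmean (1 + (v - 1) * T)) as Hquot.
  rewrite <- Hfix in Hquot. replace (1 - (1 + (v - 1) * T)) with ((1 - v) * T) in Hquot by ring.
  apply (Rmult_eq_reg_l ((1 - v) * T)); [|nra]. rewrite <- Hquot. field. lra.
Qed.

Lemma xstar_noroot : (forall x, 0 <= x < 1 -> K x <> 1 / T) -> xstar T1 T2 q = 1.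
Proof.
  intros Hnone. unfold xstar. rewrite (ustar_eq _ _ _ 1); [ring|].
  split; [lra|split].
  - rewrite Fq_pgf by exact HP. replace (1 + (1 - 1) * T) with 1 by ring.
    symmetry. apply pgf_Q1; assumption.
  - intros v Hv Hfix. destruct (Req_dec v 1) as [->|Hne]; [lra|].
    destruct (fixed_point_root v ltac:(lra) Hfix) as [Hx HK].
    exfalso. exact (Hnone _ Hx HK).
Qed.

Lemma root_coef_witness (x : R) :
  K x = 1 / T -> exists m0, (2 <= m0 <= kmax)%nat /\ 0 < Q m0.
Proof.
  intros HKx. apply (pgf_quot_witness Q kmax (Qex_nonneg P kmax HP Hmean) x).
  rewrite sum_Qex, HKx by assumption. exact one_lt_invT.
Qed.

Lemma root_pos (x : R) : 0 <= x -> K x = 1 / T -> 0 < x.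
Proof.
  intros Hx HKx. destruct (Req_dec x 0) as [Hz|Hz]; [exfalso|lra].
  pose proof (pgf_quot0_le Q kmax (Qex_nonneg P kmax HP Hmean)) as HK0.
  rewrite sum_Qex in HK0 by assumption. rewrite Hz in HKx.
  pose proof one_lt_invT. lra.
Qed.

Lemma xstar_root (x : R) : 0 <= x < 1 -> K x = 1 / T -> xstar T1 T2 q = x.
Proof.
  intros Hx HKx. destruct (root_coef_witness x HKx) as [m0 [Hm0 HQm0]].
  assert (Hinj : forall z, 0 <= z -> K z = K x -> z = x).
  { intros z Hz HKz. destruct (Rle_dec z x) as [Hzx|Hzx].
    - pose proof (pgf_quot_rate Q kmax (Qex_nonneg P kmax HP Hmean) m0
                    ltac:(lia) ltac:(lia) HQm0 z x ltac:(lra)). nra.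
    - pose proof (pgf_quot_rate Q kmax (Qex_nonneg P kmax HP Hmean) m0
                    ltac:(lia) ltac:(lia) HQm0 x z ltac:(lra)). nra. }
  set (u0 := 1 - (1 - x) / T).
  assert (Hux : 1 + (u0 - 1) * T = x) by (unfold u0; field; lra).
  unfold xstar. rewrite (ustar_eq _ _ _ u0); [exact Hux|].
  assert (Hfix : u0 = Fq P kmax T1 T2 q u0).
  { rewrite Fq_pgf, Hux by exact HP.
    pose proof (one_sub_pgf_Q P kmax HP Hmean x) as Hquot. rewrite HKx in Hquot.
    unfold u0. replace ((1 - x) / T) with ((1 - x) * (1 / T)) by (field; lra). lra. }
  assert (Hu0 : u0 <= 1).
  { assert (0 <= (1 - x) / T)
      by (apply Rmult_le_pos; [lra | left; apply Rinv_0_lt_compat; lra]).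
    unfold u0. lra. }
  split; [|split; [exact Hfix|]].
  - split; [|exact Hu0]. rewrite Hfix, Fq_pgf, Hux by exact HP.
    apply pgf_nonneg; [apply Qex_nonneg; assumption | lra].
  - intros v Hv Hvfix. destruct (Req_dec v 1) as [->|Hne]; [exact Hu0|].
    destruct (fixed_point_root v ltac:(lra) Hvfix) as [Hxv HKv].
    assert (1 + (v - 1) * T = x) by (apply Hinj; [lra | congruence]).
    assert (v = u0) by (unfold u0; apply (Rmult_eq_reg_r T); [field_simplify; lra | lra]).
    lra.
Qed.

Lemma root_exists : 1 / T < K 1 -> exists x, 0 <= x < 1 /\ K x = 1 / T.
Proof.
  intros HK1.
  assert (HK0 : K 0 < 1 / T).
  { pose proof (pgf_quot0_le Q kmax (Qex_nonneg P kmax HP Hmean)) as H0.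
    rewrite sum_Qex in H0 by assumption. pose proof one_lt_invT. lra. }
  destruct (IVT (fun x => K x - 1 / T) 0 1) as [x [Hx HKx]].
  - intros x. apply continuity_pt_minus; [apply continuity_pgf_quot | apply continuity_pt_const].
    intros a b. reflexivity.
  - lra.
  - lra.
  - lra.
  - exists x. assert (x <> 1) by (intros ->; lra). split; [lra|lra].
Qed.

Lemma root_of_psi_lt1 : psi P kmax T1 T2 q < 1 -> exists x, 0 <= x < 1 /\ K x = 1 / T.
Proof.
  intros Hpsi. apply NNPP. intros Hnone.
  assert (Hx1 : xstar T1 T2 q = 1).
  { apply xstar_noroot. intros x Hx HKx. apply Hnone. exists x. auto. }
  rewrite psi_xstar, Hx1, pgf_P1 in Hpsi by assumption. lra.
Qed.

End FixedT.

End FixedPoint.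

Section Derivatives.

Variables (P : nat -> R) (kmax : nat) (T1 T2 : R).
Hypotheses (HP : is_degree_dist P kmax) (Hmean : 0 < mean_deg P kmax).
Hypotheses (HT2 : 0 < T2) (HT12 : T2 < T1) (HT1 : T1 < 1).

Local Notation K := (pgf_quot (Qex P kmax) kmax).

Lemma Teff_in01 (q : R) : 0 <= q <= 1 -> 0 < Teff T1 T2 q < 1.
Proof. intros Hq. pose proof (Teff_bounds T1 T2 q HT12 Hq). lra. Qed.

Lemma xstar_locally_root (q0 : R) : 0 <= q0 <= 1 -> 1 / Teff T1 T2 q0 < K 1 ->
  exists d, 0 < d /\ forall h, Rabs h < d -> 0 <= q0 + h <= 1 ->
    0 <= xstar P kmax T1 T2 (q0 + h) /\ K (xstar P kmax T1 T2 (q0 + h)) = 1 / Teff T1 T2 (q0 + h).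
Proof.
  intros Hq0 HK1.
  pose proof (has_deriv01_continuous _ _ _ (has_deriv01_of_derivable _ _ _
    (derivable_pt_lim_inv_Teff T1 T2 q0 ltac:(pose proof (Teff_in01 q0 Hq0); lra))))
    as Hcont.
  destruct (Hcont (K 1 - 1 / Teff T1 T2 q0) ltac:(lra)) as [d [Hd Hnear]].
  simpl in Hnear. unfold Rdist in Hnear.
  exists d. split; [exact Hd|]. intros h Hh Hqh.
  assert (Hs : 1 / Teff T1 T2 (q0 + h) < K 1).
  { destruct (Req_dec h 0) as [->|Hh0]; [rewrite Rplus_0_r; exact HK1|].
    assert (Hh' : Rabs (h - 0) < d) by (rewrite Rminus_0_r; exact Hh).
    specialize (Hnear h (conj (conj Hh0 Hqh) Hh')).
    apply Rabs_def2 in Hnear. lra. }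
  pose proof (Teff_in01 _ Hqh) as HT.
  destruct (root_exists P kmax HP Hmean T1 T2 (q0 + h) HT Hs) as [z [Hz HKz]].
  rewrite (xstar_root P kmax HP Hmean T1 T2 (q0 + h) HT z Hz HKz). split; [lra | exact HKz].
Qed.

Lemma psi_has_pos_deriv (q0 : R) : 0 <= q0 <= 1 -> psi P kmax T1 T2 q0 < 1 ->
  exists l, has_deriv01 (psi P kmax T1 T2) q0 l /\ 0 < l.
Proof.
  intros Hq0 Hpsi. pose proof (Teff_in01 q0 Hq0) as HT0.
  destruct (root_of_psi_lt1 P kmax HP Hmean T1 T2 q0 HT0 Hpsi) as [x0 [Hx0 HKx0]].
  set (T0 := Teff T1 T2 q0) in *.
  assert (HT0ne : T0 <> 0) by lra.
  destruct (root_coef_witness P kmax HP Hmean T1 T2 q0 HT0 x0 HKx0) as [m0 [Hm0 HQm0]].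
  pose proof (Qex_nonneg P kmax HP Hmean) as HQ.
  pose proof (pgf_quot_rate _ kmax HQ m0 ltac:(lia) ltac:(lia) HQm0) as Hrate.
  pose proof (xstar_root P kmax HP Hmean T1 T2 q0 HT0 x0 Hx0 HKx0) as Hxstar0.
  pose proof (root_pos P kmax HP Hmean T1 T2 q0 HT0 x0 (proj1 Hx0) HKx0) as Hx0pos.
  assert (HdK : Qex P kmax m0 <= pgf_quot_deriv (Qex P kmax) kmax x0)
    by (apply (pgf_quot_deriv_ge _ kmax HQ m0); lia || lra).
  assert (Hx0K1 : 1 / T0 < K 1) by (pose proof (Hrate x0 1 ltac:(lra)); nra).
  pose proof (has_deriv01_implicit K (fun t => 1 / Teff T1 T2 t) (xstar P kmax T1 T2) q0
    (pgf_quot_deriv (Qex P kmax) kmax x0) ((T1 - T2) / T0 ^ 2) (Qex P kmax m0) 0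
    Hq0 HQm0 Hrate (xstar_locally_root q0 Hq0 Hx0K1)
    ltac:(rewrite Hxstar0; apply derivable_pt_lim_pgf_quot) ltac:(lra)
    (has_deriv01_of_derivable _ _ _ (derivable_pt_lim_inv_Teff T1 T2 q0 HT0ne)))
    as Hxder.
  exists (pgf_deriv P kmax x0 * ((T1 - T2) / T0 ^ 2 / pgf_quot_deriv (Qex P kmax) kmax x0)).
  split.
  - apply (has_deriv01_ext _ (fun t => pgf P kmax (xstar P kmax T1 T2 t))).
    { intros t. apply psi_xstar. exact HP. }
    apply has_deriv01_comp; [rewrite Hxstar0; apply derivable_pt_lim_pgf | exact Hxder].
  - apply Rmult_lt_0_compat; [exact (pgf_deriv_pos P kmax (P_nonneg P kmax HP) x0 Hmean Hx0pos)|].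
    apply Rdiv_lt_0_compat; [|lra]. apply Rdiv_lt_0_compat; [lra|]. apply pow_lt. lra.
Qed.

Lemma has_deriv01_nu_tilde (q : R) :
  has_deriv01 (nu_tilde P kmax T1 T2) q
    ((T2 - T1) * sum_f_R0 (fun m => INR m * Qex P kmax m) kmax).
Proof.
  apply (has_deriv01_ext _
    (fun t => Teff T1 T2 t * sum_f_R0 (fun m => INR m * Qex P kmax m) kmax)).
  { intros t. apply nu_tilde_Teff. exact HP. }
  apply has_deriv01_of_derivable.
  apply (derivable_pt_lim_scal_right (Teff T1 T2)). apply derivable_pt_lim_Teff.
Qed.

End Derivatives.

Theorem theorem2 (P : nat -> R) (kmax : nat) (T1 T2 : R) :
  is_degree_dist P kmax ->
  0 < mean_deg P kmax ->
  0 < T2 -> T2 < T1 -> T1 < 1 ->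
  0 < sum_f_R0 (fun m => INR m * Qex P kmax m) kmax ->
  (forall q, 0 <= q <= 1 ->
     0 < psi P kmax T1 T2 q < 1 ->
     exists l, has_deriv01 (psi P kmax T1 T2) q l /\ 0 < l) /\
  (forall q, 0 <= q <= 1 ->
     exists l, has_deriv01 (nu_tilde P kmax T1 T2) q l /\ l < 0).
Proof.
  intros HP Hmean HT2 HT12 HT1 HM. split.
  - intros q Hq [_ Hpsi]. exact (psi_has_pos_deriv P kmax T1 T2 HP Hmean HT2 HT12 HT1 q Hq Hpsi).
  - intros q _. eexists. split; [exact (has_deriv01_nu_tilde P kmax T1 T2 HP q)|]. nra.
Qed.
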